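(* Assume A2, let $x\in\mathcal I$ and suppose the $x$-threshold word $\pi$ exists. Then (1) if $00$ occurs as a factor of $\pi$, then $\pi=L_n(w)$ for some word $w$ and some $n\ge1$; (2) if $11$ occurs as a factor of $\pi$, then $\pi=R_n(w)$ for some word $w$ and some $n\ge1$.
   Context: Words are finite strings over $\{0,1\}$; $w^\omega$ is the infinite repetition of $w$. Let $\mathcal I\subseteq\mathbb R$ be an interval and $\phi_0,\phi_1:\mathcal I\to\mathcal I$. For a word $w$ put $\phi_w:=\phi_{w_{|w|}}\circ\cdots\circ\phi_{w_1}$ (first letter applied first), $\phi_\epsilon=\mathrm{id}$. Assumption A2: for all $x<y$ in $\mathcal I$ and $k\in\{0,1\}$, $\phi_k(x)<\phi_k(y)$ and $\phi_k(y)-\phi_k(x)<y-x$; moreover $\phi_0,\phi_1$ have fixed points $y_0,y_1\in\mathcal I$ with $y_1<y_0$. The $x$-threshold orbit is the sequence $(x_k)_{k\ge1}$ with $x_1=\phi_1(x)$ and $x_{k+1}=\phi_1(x_k)$ if $x_k\ge x$, $x_{k+1}=\phi_0(x_k)$ if $x_k<x$. The $x$-threshold word is the shortest non-empty finite word $\pi$ such that $x_{k+1}=\phi_{(\pi^\omega)_k}(x_k)$ for all $k\ge1$, when such a word exists. For $p\ge1$, $L_p$ and $R_p$ are the word morphisms (substitutions) determined by $L_p(0)=0^{p+1}1$, $L_p(1)=0^p1$, $R_p(0)=01^p$, $R_p(1)=01^{p+1}$, extended to words by concatenation. *)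

(* real numbers from Stdlib Reals, words as lists of bool
   (letter 0 = false, letter 1 = true). *)
From Stdlib Require Import Reals List.
Import ListNotations.
Open Scope R_scope.

Definition word := list bool.

Definition phi_of (phi0 phi1 : R -> R) (k : bool) : R -> R :=
  if k then phi1 else phi0.

Definition is_interval (I : R -> Prop) : Prop :=
  forall a b c, I a -> I c -> a <= b -> b <= c -> I b.

(* Assumption A2 (plus phi_k : I -> I). *)
Definition A2 (I : R -> Prop) (phi0 phi1 : R -> R) : Prop :=
  (forall k z, I z -> I (phi_of phi0 phi1 k z)) /\
  (forall k u v, I u -> I v -> u < v ->
     phi_of phi0 phi1 k u < phi_of phi0 phi1 k v /\
     phi_of phi0 phi1 k v - phi_of phi0 phi1 k u < v - u) /\
  (exists y0 y1, I y0 /\ I y1 /\ phi0 y0 = y0 /\ phi1 y1 = y1 /\ y1 < y0).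

(* x-threshold orbit, shifted: orbit n = x_(n+1), for n : nat. *)
Fixpoint orbit (phi0 phi1 : R -> R) (x : R) (n : nat) : R :=
  match n with
  | O => phi1 x
  | S m => let z := orbit phi0 phi1 x m in
           if Rle_dec x z then phi1 z else phi0 z
  end.

(* (pi^omega)_k for k >= 1 (1-indexed), pi non-empty. *)
Definition omega_letter (pi : word) (k : nat) : bool :=
  nth (Nat.modulo (k - 1) (length pi)) pi false.

Definition generates (phi0 phi1 : R -> R) (x : R) (pi : word) : Prop :=
  forall k : nat, (1 <= k)%nat ->
    orbit phi0 phi1 x k = phi_of phi0 phi1 (omega_letter pi k) (orbit phi0 phi1 x (k - 1)).

Definition is_threshold_word (phi0 phi1 : R -> R) (x : R) (pi : word) : Prop :=
  pi <> [] /\ generates phi0 phi1 x pi /\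
  (forall pi', pi' <> [] -> generates phi0 phi1 x pi' -> (length pi <= length pi')%nat).

Definition factor (u w : word) : Prop := exists a b, w = a ++ u ++ b.

Definition L_img (p : nat) (c : bool) : word :=
  if c then repeat false p ++ [true] else repeat false (S p) ++ [true].
Definition R_img (p : nat) (c : bool) : word :=
  if c then false :: repeat true (S p) else false :: repeat true p.
Definition Lmorph (p : nat) (w : word) : word := flat_map (L_img p) w.
Definition Rmorph (p : nat) (w : word) : word := flat_map (R_img p) w.

(* If x <= y1 or y0 <= x the threshold decisions are constant and the threshold word
   is a single letter.  Otherwise the orbit stays in [phi1 x, phi0 x], where
   phi1 z < z < phi0 z, so the letters of the threshold word are the threshold
   decisions, and these are periodic.  As both maps contract distances,
   phi1 (phi0 x) < phi0 (phi1 x).  Hence every maximal run of 0s starts in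
   [phi1 x, phi0 (phi1 x)], and by monotonicity the phi0-iterates of its starting
   point interleave with those of phi1 x: all runs of 0s have length n or n + 1,
   where n + 1 is the length of the first one, which is the block structure of
   L_n.  Symmetrically, after a 0 the orbit is at a point z with
   phi1 z <= phi0 (phi1 x) <= z, so the runs of 1s have length n or n + 1: this is
   the block structure of R_n. *)

From Stdlib Require Import Reals List Lra Lia Arith Wf_nat Classical.
Import ListNotations.
Open Scope R_scope.

Definition first_true (A : nat -> bool) (k : nat) : Prop :=
  A k = true /\ forall i, (i < k)%nat -> A i = false.

Lemma first_true_exists (A : nat -> bool) :
  (exists i, A i = true) -> exists k, first_true A k.
Proof.
  intros HA.
  destruct (dec_inh_nat_subset_has_unique_least_element (fun i => A i = true))
    as [k [[Hk Hleast] _]]; [intros i; destruct (A i); auto|exact HA|].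
  exists k; split; [exact Hk|].
  intros i Hi; destruct (A i) eqn:E; [|reflexivity].
  specialize (Hleast i E); lia.
Qed.

Lemma first_true_ext (A B : nat -> bool) (k : nat) :
  (forall i, (i <= k)%nat -> A i = B i) -> first_true A k -> first_true B k.
Proof.
  intros AB [Ak Abefore]; split.
  - rewrite <- AB by lia; exact Ak.
  - intros i Hi; rewrite <- AB by lia; auto.
Qed.

Lemma first_true_interleave (A B : nat -> bool) (ka kb : nat) :
  (forall i, A i = true -> B i = true) -> (forall i, B i = true -> A (S i) = true) ->
  first_true A ka -> first_true B kb -> (kb <= ka <= S kb)%nat.
Proof.
  intros AB BA [Aka Abefore] [Bkb Bbefore]; split.
  - destruct (le_lt_dec kb ka) as [|Hlt]; [assumption|].
    specialize (Bbefore ka Hlt); rewrite (AB ka Aka) in Bbefore; discriminate.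
  - destruct (le_lt_dec ka (S kb)) as [|Hlt]; [assumption|].
    specialize (Abefore (S kb) Hlt); rewrite (BA kb Bkb) in Abefore; discriminate.
Qed.

Lemma map_seq_repeat (d : nat -> bool) (c : bool) (m k : nat) :
  (forall i, (i < k)%nat -> d (m + i)%nat = c) -> map d (seq m k) = repeat c k.
Proof.
  revert m; induction k as [|k IH]; intros m Hd; [reflexivity|]; simpl.
  rewrite <- (Nat.add_0_r m) at 1; rewrite Hd by lia; f_equal.
  apply IH; intros i Hi; rewrite Nat.add_succ_comm; apply Hd; lia.
Qed.

Lemma Lmorph_of_zero_runs (d : nat -> bool) (n e : nat) :
  (forall m, (m < e)%nat -> (m = 0%nat \/ d (pred m) = true) ->
     exists k, (k = n \/ k = S n) /\ (m + k < e)%nat /\ first_true (fun i => d (m + i)%nat) k) ->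
  exists w, map d (seq 0 e) = Lmorph n w.
Proof.
  intros Hruns.
  enough (H : forall t m, (e - m = t)%nat -> (m <= e)%nat -> (m = 0%nat \/ d (pred m) = true) ->
                exists w, map d (seq m (e - m)) = Lmorph n w).
  { destruct (H e 0%nat) as [w Hw]; [lia|lia|auto|].
    exists w; rewrite <- Hw, Nat.sub_0_r; reflexivity. }
  induction t as [t IH] using lt_wf_ind; intros m Ht Hm Hstart.
  destruct (Nat.eq_dec m e) as [->|Hme].
  { exists []; rewrite Nat.sub_diag; reflexivity. }
  destruct (Hruns m ltac:(lia) Hstart) as [k [Hk [Hke [Hend Hzeros]]]].
  destruct (IH (e - S (m + k))%nat ltac:(lia) (S (m + k)) eq_refl ltac:(lia) (or_intror Hend))
    as [w Hw].
  exists (Nat.eqb k n :: w).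
  replace (e - m)%nat with (k + S (e - S (m + k)))%nat by lia.
  rewrite seq_app, map_app, (map_seq_repeat d false m k Hzeros); simpl.
  rewrite Hend, Hw; unfold Lmorph; simpl; fold (Lmorph n w).
  destruct Hk as [->| ->].
  - rewrite Nat.eqb_refl; simpl; rewrite <- app_assoc; reflexivity.
  - rewrite (proj2 (Nat.eqb_neq _ _)) by lia; simpl; rewrite <- app_assoc; reflexivity.
Qed.

Lemma Rmorph_of_one_runs (d : nat -> bool) (n e : nat) :
  d 0%nat = false ->
  (forall m, (m < e)%nat -> d m = false ->
     exists k, (k = n \/ k = S n) /\ (S m + k <= e)%nat /\
       first_true (fun i => negb (d (S m + i)%nat)) k) ->
  exists w, map d (seq 0 e) = Rmorph n w.
Proof.
  intros Hd0 Hruns.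
  enough (H : forall t m, (e - m = t)%nat -> (m <= e)%nat -> d m = false ->
                exists w, map d (seq m (e - m)) = Rmorph n w).
  { destruct (H e 0%nat) as [w Hw]; [lia|lia|auto|].
    exists w; rewrite <- Hw, Nat.sub_0_r; reflexivity. }
  induction t as [t IH] using lt_wf_ind; intros m Ht Hm Hstart.
  destruct (Nat.eq_dec m e) as [->|Hme].
  { exists []; rewrite Nat.sub_diag; reflexivity. }
  destruct (Hruns m ltac:(lia) Hstart) as [k [Hk [Hke [Hend Hones]]]].
  apply Bool.negb_true_iff in Hend.
  destruct (IH (e - (S m + k))%nat ltac:(lia) (S m + k)%nat eq_refl Hke Hend) as [w Hw].
  exists (negb (Nat.eqb k n) :: w).
  replace (e - m)%nat with (S k + (e - (S m + k)))%nat by lia.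
  rewrite seq_app, map_app.
  replace (m + S k)%nat with (S m + k)%nat by lia.
  rewrite Hw; simpl.
  rewrite Hstart, (map_seq_repeat d true (S m) k).
  2: { intros i Hi; apply Bool.negb_false_iff, Hones, Hi. }
  unfold Rmorph; simpl; fold (Rmorph n w).
  destruct Hk as [->| ->].
  - rewrite Nat.eqb_refl; reflexivity.
  - rewrite (proj2 (Nat.eqb_neq _ _)) by lia; reflexivity.
Qed.

Lemma factor_pair_nth (c1 c2 : bool) (l : word) :
  factor [c1; c2] l ->
  exists j, (S j < length l)%nat /\ nth j l false = c1 /\ nth (S j) l false = c2.
Proof.
  intros [u [v ->]]; induction u as [|b u IH]; simpl.
  - exists 0%nat; simpl; repeat split; lia.
  - destruct IH as [j [Hj [Hj1 Hj2]]]; exists (S j); simpl; repeat split; auto; simpl in Hj; lia.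
Qed.

Lemma mod_letters_periodic (pi : word) (d : nat -> bool) :
  (forall m, nth (m mod length pi) pi false = d m) -> forall m, d (m + length pi)%nat = d m.
Proof.
  intros Hd m; rewrite <- !Hd; f_equal.
  rewrite <- (Nat.mul_1_l (length pi)) at 1; apply Nat.Div0.mod_add.
Qed.

Lemma mod_letters_map_seq (pi : word) (d : nat -> bool) :
  (forall m, nth (m mod length pi) pi false = d m) -> pi = map d (seq 0 (length pi)).
Proof.
  intros Hd; apply nth_ext with false false.
  { rewrite length_map, length_seq; reflexivity. }
  intros j Hj.
  rewrite (nth_indep (map d (seq 0 (length pi))) false (d 0%nat))
    by (rewrite length_map, length_seq; lia).
  rewrite map_nth, seq_nth by lia; rewrite <- Hd, Nat.mod_small by lia; reflexivity.
Qed.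

Definition contraction_on (I : R -> Prop) (f : R -> R) : Prop :=
  (forall z, I z -> I (f z)) /\
  (forall u v, I u -> I v -> u < v -> f u < f v /\ f v - f u < v - u).

Section Contraction.

Variables (I : R -> Prop) (f : R -> R).
Hypothesis f_contraction : contraction_on I f.

Lemma contraction_le u v : I u -> I v -> u <= v -> f u <= f v.
Proof.
  intros Iu Iv [Huv| ->]; [|lra].
  left; apply (proj2 f_contraction u v Iu Iv Huv).
Qed.

Lemma iter_in n z : I z -> I (Nat.iter n f z).
Proof. intros Iz; induction n as [|n IH]; [exact Iz|apply (proj1 f_contraction), IH]. Qed.

Lemma iter_le n u v : I u -> I v -> u <= v -> Nat.iter n f u <= Nat.iter n f v.
Proof.
  intros Iu Iv Huv; induction n as [|n IH]; [exact Huv|].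
  apply contraction_le; [apply iter_in; exact Iu|apply iter_in; exact Iv|exact IH].
Qed.

Variable y : R.
Hypotheses (I_y : I y) (f_y : f y = y).

Lemma contraction_lt_fix z : I z -> z < y -> z < f z < y.
Proof. intros Iz Hz; destruct (proj2 f_contraction z y Iz I_y Hz); lra. Qed.

Lemma contraction_gt_fix z : I z -> y < z -> y < f z < z.
Proof. intros Iz Hz; destruct (proj2 f_contraction y z I_y Iz Hz); lra. Qed.

Lemma contraction_le_fix z : I z -> z <= y -> z <= f z <= y.
Proof.
  intros Iz [Hz| ->]; [destruct (contraction_lt_fix z Iz Hz); lra|lra].
Qed.

Lemma contraction_ge_fix z : I z -> y <= z -> y <= f z <= z.
Proof.
  intros Iz [Hz| <-]; [destruct (contraction_gt_fix z Iz Hz); lra|lra].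
Qed.

End Contraction.

Definition letter (x z : R) : bool := if Rle_dec x z then true else false.

Definition threshold_letter (phi0 phi1 : R -> R) (x : R) (m : nat) : bool :=
  letter x (orbit phi0 phi1 x m).

Lemma letter_true x z : letter x z = true <-> x <= z.
Proof. unfold letter; destruct (Rle_dec x z); split; auto; discriminate. Qed.

Lemma letter_false x z : letter x z = false <-> z < x.
Proof. unfold letter; destruct (Rle_dec x z); split; intros; auto; lra || discriminate. Qed.

Lemma orbit_succ phi0 phi1 x m :
  orbit phi0 phi1 x (S m) =
  phi_of phi0 phi1 (threshold_letter phi0 phi1 x m) (orbit phi0 phi1 x m).
Proof. unfold threshold_letter, letter, phi_of; simpl; destruct Rle_dec; reflexivity. Qed.

Lemma threshold_letters_follow_iter phi0 phi1 x c m k :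
  (forall i, (i < k)%nat ->
     letter x (Nat.iter i (phi_of phi0 phi1 c) (orbit phi0 phi1 x m)) = c) ->
  forall i, (i <= k)%nat ->
    threshold_letter phi0 phi1 x (m + i) =
    letter x (Nat.iter i (phi_of phi0 phi1 c) (orbit phi0 phi1 x m)).
Proof.
  intros Hrun i Hi; unfold threshold_letter; f_equal.
  induction i as [|i IH]; [rewrite Nat.add_0_r; reflexivity|].
  rewrite <- plus_n_Sm, orbit_succ; unfold threshold_letter.
  rewrite IH, Hrun by lia; reflexivity.
Qed.

Lemma threshold_word_length_le_1 phi0 phi1 x pi c :
  is_threshold_word phi0 phi1 x pi ->
  (forall m, threshold_letter phi0 phi1 x m = c) -> (length pi <= 1)%nat.
Proof.
  intros [_ [_ Hmin]] Hc; apply (Hmin [c]); [discriminate|].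
  intros [|k] Hk; [lia|].
  unfold omega_letter; simpl length; rewrite Nat.mod_1_r, orbit_succ, Hc.
  replace (S k - 1)%nat with k by lia; reflexivity.
Qed.

Lemma threshold_letters_of_generates phi0 phi1 x pi :
  generates phi0 phi1 x pi ->
  (forall m, phi1 (orbit phi0 phi1 x m) <> phi0 (orbit phi0 phi1 x m)) ->
  forall m, nth (m mod length pi) pi false = threshold_letter phi0 phi1 x m.
Proof.
  intros Hgen Hne m; specialize (Hgen (S m) ltac:(lia)).
  unfold omega_letter in Hgen; rewrite orbit_succ in Hgen.
  replace (S m - 1)%nat with m in Hgen by lia.
  destruct (nth _ pi false), (threshold_letter phi0 phi1 x m); simpl in Hgen; auto;
    exfalso; apply (Hne m); congruence.
Qed.

Section ThresholdDynamics.

Variables (I : R -> Prop) (phi0 phi1 : R -> R) (x y0 y1 : R).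
Hypotheses (contraction0 : contraction_on I phi0) (contraction1 : contraction_on I phi1).
Hypotheses (I_y0 : I y0) (I_y1 : I y1) (phi0_y0 : phi0 y0 = y0) (phi1_y1 : phi1 y1 = y1).
Hypothesis I_x : I x.

Local Notation o := (orbit phi0 phi1 x).
Local Notation D := (threshold_letter phi0 phi1 x).

Lemma phi_in k z : I z -> I (phi_of phi0 phi1 k z).
Proof. destruct k; [apply contraction1|apply contraction0]. Qed.

Lemma orbit_in m : I (o m).
Proof.
  induction m as [|m IH]; [apply (phi_in true), I_x|].
  rewrite orbit_succ; apply phi_in, IH.
Qed.

Lemma threshold_letters_true_of_le_y1 : x <= y1 -> forall m, D m = true.
Proof.
  intros Hx.
  assert (Hbounds : forall m, x <= o m <= y1).
  { induction m as [|m IH].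
    - destruct (contraction_le_fix I phi1 contraction1 y1 I_y1 phi1_y1 x I_x Hx); simpl; lra.
    - rewrite orbit_succ.
      replace (D m) with true by (symmetry; apply letter_true; lra).
      destruct (contraction_le_fix I phi1 contraction1 y1 I_y1 phi1_y1 (o m) (orbit_in m)
                  (proj2 IH)).
      simpl; lra. }
  intros m; apply letter_true, Hbounds.
Qed.

Lemma threshold_letters_false_of_ge_y0 : y1 < x -> y0 <= x -> forall m, D m = false.
Proof.
  intros Hx1 Hx0.
  assert (Hbelow : forall m, o m < x).
  { induction m as [|m IH].
    - destruct (contraction_gt_fix I phi1 contraction1 y1 I_y1 phi1_y1 x I_x Hx1); simpl; lra.
    - rewrite orbit_succ.
      replace (D m) with false by (symmetry; apply letter_false; lra).
      simpl; destruct (Rlt_le_dec (o m) y0) as [Hlt|Hge].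
      + destruct (contraction_lt_fix I phi0 contraction0 y0 I_y0 phi0_y0 (o m) (orbit_in m) Hlt);
          lra.
      + destruct (contraction_ge_fix I phi0 contraction0 y0 I_y0 phi0_y0 (o m) (orbit_in m) Hge);
          lra. }
  intros m; apply letter_false, Hbelow.
Qed.

Section MainCase.

Hypotheses (y1_lt_x : y1 < x) (x_lt_y0 : x < y0).

Lemma phi1_x_bounds : y1 < phi1 x < x.
Proof. exact (contraction_gt_fix I phi1 contraction1 y1 I_y1 phi1_y1 x I_x y1_lt_x). Qed.

Lemma phi0_x_bounds : x < phi0 x < y0.
Proof. exact (contraction_lt_fix I phi0 contraction0 y0 I_y0 phi0_y0 x I_x x_lt_y0). Qed.

Lemma orbit_bounds m : phi1 x <= o m <= phi0 x.
Proof.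
  pose proof phi1_x_bounds; pose proof phi0_x_bounds.
  induction m as [|m IH]; [simpl; lra|].
  rewrite orbit_succ; destruct (D m) eqn:Hm; simpl.
  - apply letter_true in Hm.
    pose proof (contraction_le I phi1 contraction1 x (o m) I_x (orbit_in m) Hm).
    destruct (contraction_gt_fix I phi1 contraction1 y1 I_y1 phi1_y1 (o m) (orbit_in m) ltac:(lra)).
    lra.
  - apply letter_false in Hm.
    pose proof (contraction_le I phi0 contraction0 (o m) x (orbit_in m) I_x (Rlt_le _ _ Hm)).
    destruct (contraction_lt_fix I phi0 contraction0 y0 I_y0 phi0_y0 (o m) (orbit_in m) ltac:(lra)).
    lra.
Qed.

Lemma orbit_maps_differ m : phi1 (o m) <> phi0 (o m).
Proof.
  pose proof phi1_x_bounds; pose proof phi0_x_bounds; pose proof (orbit_bounds m).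
  destruct (contraction_gt_fix I phi1 contraction1 y1 I_y1 phi1_y1 (o m) (orbit_in m) ltac:(lra)).
  destruct (contraction_lt_fix I phi0 contraction0 y0 I_y0 phi0_y0 (o m) (orbit_in m) ltac:(lra)).
  lra.
Qed.

(* phi1 (phi0 x) < phi1 x + (phi0 x - x) < phi0 (phi1 x), by contraction of
   phi1 on [x, phi0 x] and of phi0 on [phi1 x, x]. *)
Lemma threshold_gap : phi1 (phi0 x) < phi0 (phi1 x).
Proof.
  pose proof phi1_x_bounds; pose proof phi0_x_bounds.
  destruct (proj2 contraction1 x (phi0 x) I_x (proj1 contraction0 x I_x) ltac:(lra)).
  destruct (proj2 contraction0 (phi1 x) x (proj1 contraction1 x I_x) I_x ltac:(lra)).
  lra.
Qed.

Lemma zero_block_start_bounds m :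
  (m = 0%nat \/ D (pred m) = true) -> phi1 x <= o m <= phi0 (phi1 x).
Proof.
  intros Hstart; split; [apply orbit_bounds|].
  pose proof threshold_gap; pose proof phi0_x_bounds.
  enough (o m <= phi1 (phi0 x)) by lra.
  destruct m as [|m]; simpl pred in Hstart.
  - apply (contraction_le I phi1 contraction1); [exact I_x|apply contraction0, I_x|lra].
  - destruct Hstart as [|Hprev]; [discriminate|].
    rewrite orbit_succ, Hprev; simpl.
    apply (contraction_le I phi1 contraction1);
      [apply orbit_in|apply contraction0, I_x|apply orbit_bounds].
Qed.

Lemma one_block_start_bounds m :
  D m = false -> phi0 (phi1 x) <= o (S m) /\ phi1 (o (S m)) <= phi0 (phi1 x).
Proof.
  intros Hm; pose proof threshold_gap; pose proof (orbit_bounds m).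
  apply letter_false in Hm as Hm_lt.
  rewrite orbit_succ, Hm; simpl; split.
  - apply (contraction_le I phi0 contraction0);
      [apply contraction1, I_x|apply orbit_in|apply orbit_bounds].
  - enough (phi1 (phi0 (o m)) <= phi1 (phi0 x)) by lra.
    apply (contraction_le I phi1 contraction1);
      [apply contraction0, orbit_in|apply contraction0, I_x|].
    apply (contraction_le I phi0 contraction0); [apply orbit_in|exact I_x|lra].
Qed.

Lemma zero_run_lengths r m :
  first_true (fun i => letter x (Nat.iter i phi0 (phi1 x))) r ->
  (m = 0%nat \/ D (pred m) = true) ->
  exists k, first_true (fun i => D (m + i)%nat) k /\ (k <= r <= S k)%nat.
Proof.
  intros Hr Hstart; destruct (zero_block_start_bounds m Hstart) as [Hlow Hup].
  pose proof (proj1 contraction1 x I_x) as I_a.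
  set (A := fun i => letter x (Nat.iter i phi0 (phi1 x))) in Hr.
  set (B := fun i => letter x (Nat.iter i phi0 (o m))).
  assert (AB : forall i, A i = true -> B i = true).
  { intros i Hi; apply letter_true in Hi; apply letter_true.
    apply Rle_trans with (1 := Hi), (iter_le I phi0 contraction0); auto using orbit_in. }
  assert (BA : forall i, B i = true -> A (S i) = true).
  { intros i Hi; apply letter_true in Hi; apply letter_true.
    unfold A; rewrite Nat.iter_succ_r; apply Rle_trans with (1 := Hi).
    apply (iter_le I phi0 contraction0); auto using orbit_in; apply contraction0, I_a. }
  destruct (first_true_exists B) as [k Hk]; [exists r; apply AB, Hr|].
  exists k; split; [|exact (first_true_interleave A B r k AB BA Hr Hk)].
  apply first_true_ext with (2 := Hk); intros i Hi.
  symmetry; apply (threshold_letters_follow_iter phi0 phi1 x false m k); [|exact Hi].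
  apply Hk.
Qed.

Lemma one_run_lengths r m :
  first_true (fun i => negb (letter x (Nat.iter i phi1 (phi0 (phi1 x))))) r ->
  D m = false ->
  exists k, first_true (fun i => negb (D (S m + i)%nat)) k /\ (r <= k <= S r)%nat.
Proof.
  intros Hr Hm; destruct (one_block_start_bounds m Hm) as [Hlow Hup].
  pose proof (proj1 contraction0 _ (proj1 contraction1 x I_x)) as I_b.
  set (A := fun i => negb (letter x (Nat.iter i phi1 (o (S m))))).
  set (B := fun i => negb (letter x (Nat.iter i phi1 (phi0 (phi1 x))))) in Hr.
  assert (AB : forall i, A i = true -> B i = true).
  { intros i Hi; apply Bool.negb_true_iff, letter_false in Hi.
    apply Bool.negb_true_iff, letter_false.
    apply Rle_lt_trans with (2 := Hi), (iter_le I phi1 contraction1); auto using orbit_in. }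
  assert (BA : forall i, B i = true -> A (S i) = true).
  { intros i Hi; apply Bool.negb_true_iff, letter_false in Hi.
    apply Bool.negb_true_iff, letter_false.
    unfold A; rewrite Nat.iter_succ_r; apply Rle_lt_trans with (2 := Hi).
    apply (iter_le I phi1 contraction1); auto using orbit_in; apply contraction1, orbit_in. }
  destruct (first_true_exists A) as [k Hk]; [exists (S r); apply BA, Hr|].
  exists k; split; [|exact (first_true_interleave A B k r AB BA Hk Hr)].
  apply first_true_ext with (2 := Hk); intros i Hi.
  rewrite (threshold_letters_follow_iter phi0 phi1 x true (S m) k); [reflexivity| |exact Hi].
  intros j Hj; apply Bool.negb_false_iff, Hk, Hj.
Qed.

Variable pi : word.
Hypothesis pi_threshold : is_threshold_word phi0 phi1 x pi.

Lemma threshold_letters_mod m : nth (m mod length pi) pi false = D m.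
Proof.
  apply threshold_letters_of_generates; [apply pi_threshold|apply orbit_maps_differ].
Qed.

Lemma threshold_word_Lmorph :
  factor [false; false] pi -> exists w n, (1 <= n)%nat /\ pi = Lmorph n w.
Proof.
  intros Hf; pose proof phi1_x_bounds.
  pose proof (mod_letters_periodic pi D threshold_letters_mod) as Hper.
  destruct (factor_pair_nth _ _ _ Hf) as [j [Hj [Hj0 Hj1]]].
  rewrite <- (Nat.mod_small j (length pi)), threshold_letters_mod in Hj0 by lia.
  rewrite <- (Nat.mod_small (S j) (length pi)), threshold_letters_mod in Hj1 by lia.
  assert (Hphi0_a : phi0 (phi1 x) < x).
  { apply letter_false in Hj1; rewrite orbit_succ, Hj0 in Hj1; simpl in Hj1.
    apply Rle_lt_trans with (2 := Hj1), (contraction_le I phi0 contraction0);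
      [apply contraction1, I_x|apply orbit_in|apply orbit_bounds]. }
  assert (Href : exists r, first_true (fun i => letter x (Nat.iter i phi0 (phi1 x))) r).
  { apply first_true_exists, NNPP; intros Hnone.
    assert (Hzeros : forall m, D m = false).
    { intros m; change (D (0 + m)%nat = false).
      rewrite (threshold_letters_follow_iter phi0 phi1 x false 0 m); [| |lia];
        [|intros i _]; apply Bool.not_true_iff_false; intros Hi; apply Hnone; eauto. }
    pose proof (threshold_word_length_le_1 phi0 phi1 x pi false pi_threshold Hzeros); lia. }
  destruct Href as [r Hr].
  assert (Hr2 : (2 <= r)%nat).
  { destruct r as [|[|r]]; [| |lia]; destruct Hr as [Hr _]; apply letter_true in Hr;
      simpl in Hr; lra. }
  assert (Hfirst_run : forall i, (i < r)%nat -> D i = false).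
  { intros i Hi; change (D (0 + i)%nat = false).
    rewrite (threshold_letters_follow_iter phi0 phi1 x false 0 r); [apply Hr, Hi|apply Hr|lia]. }
  destruct (Lmorph_of_zero_runs D (r - 1) (length pi)) as [w Hw].
  { intros m Hm Hstart.
    destruct (zero_run_lengths r m Hr Hstart) as [k [[Hend Hzeros] Hk]].
    exists k; split; [lia|split; [|split; assumption]].
    (* the next period begins with r zeros *)
    destruct (le_lt_dec (length pi) (m + k)) as [Hover|]; [|assumption].
    rewrite <- (Nat.sub_add (length pi) (m + k)), Hper, Hfirst_run in Hend by lia.
    discriminate. }
  exists w, (r - 1)%nat; split; [lia|].
  rewrite <- Hw; apply mod_letters_map_seq, threshold_letters_mod.
Qed.

Lemma threshold_word_Rmorph :
  factor [true; true] pi -> exists w n, (1 <= n)%nat /\ pi = Rmorph n w.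
Proof.
  intros Hf; pose proof phi1_x_bounds; pose proof threshold_gap.
  pose proof (mod_letters_periodic pi D threshold_letters_mod) as Hper.
  destruct (factor_pair_nth _ _ _ Hf) as [j [Hj [Hj0 Hj1]]].
  rewrite <- (Nat.mod_small j (length pi)), threshold_letters_mod in Hj0 by lia.
  rewrite <- (Nat.mod_small (S j) (length pi)), threshold_letters_mod in Hj1 by lia.
  assert (Hx_le : x <= phi1 (phi0 x)).
  { apply letter_true in Hj1; rewrite orbit_succ, Hj0 in Hj1; simpl in Hj1.
    apply Rle_trans with (1 := Hj1), (contraction_le I phi1 contraction1);
      [apply orbit_in|apply contraction0, I_x|apply orbit_bounds]. }
  assert (HD0 : D 0%nat = false) by (apply letter_false; simpl; lra).
  assert (HDp : D (length pi) = false) by (rewrite <- HD0; exact (Hper 0%nat)).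
  assert (Ho1 : o 1%nat = phi0 (phi1 x)) by (rewrite orbit_succ, HD0; reflexivity).
  assert (Href :
    exists r, first_true (fun i => negb (letter x (Nat.iter i phi1 (phi0 (phi1 x))))) r).
  { apply first_true_exists, NNPP; intros Hnone.
    assert (Hones : forall i, letter x (Nat.iter i (phi_of phi0 phi1 true) (o 1%nat)) = true).
    { intros i; rewrite Ho1; apply Bool.not_false_iff_true; intros Hi; apply Hnone.
      exists i; change (phi_of phi0 phi1 true) with phi1 in Hi; rewrite Hi; reflexivity. }
    pose proof (threshold_letters_follow_iter phi0 phi1 x true 1 (length pi - 1)
                  (fun i _ => Hones i) (length pi - 1) (le_n _)) as Hlast.
    rewrite Hones in Hlast; replace (1 + (length pi - 1))%nat with (length pi) in Hlast by lia.
    congruence. }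
  destruct Href as [r Hr].
  assert (Hr1 : (1 <= r)%nat).
  { destruct r as [|r]; [|lia].
    destruct Hr as [Hr _]; apply Bool.negb_true_iff, letter_false in Hr; simpl in Hr; lra. }
  destruct (Rmorph_of_one_runs D r (length pi) HD0) as [w Hw].
  { intros m Hm Hm0.
    destruct (one_run_lengths r m Hr Hm0) as [k [[Hend Hones] Hk]].
    exists k; split; [lia|split; [|split; assumption]].
    destruct (le_lt_dec (S m + k) (length pi)) as [|Hover]; [assumption|].
    specialize (Hones (length pi - S m)%nat ltac:(lia)).
    replace (S m + (length pi - S m))%nat with (length pi) in Hones by lia.
    rewrite HDp in Hones; discriminate. }
  exists w, r; split; [exact Hr1|].
  rewrite <- Hw; apply mod_letters_map_seq, threshold_letters_mod.
Qed.

End MainCase.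

Lemma threshold_word_factor_pairs pi :
  is_threshold_word phi0 phi1 x pi ->
  (factor [false; false] pi -> exists w n, (1 <= n)%nat /\ pi = Lmorph n w) /\
  (factor [true; true] pi -> exists w n, (1 <= n)%nat /\ pi = Rmorph n w).
Proof.
  intros Hpi.
  assert (Hshort : forall c, (forall m, D m = c) -> forall c1 c2, ~ factor [c1; c2] pi).
  { intros c Hc c1 c2 Hf.
    pose proof (threshold_word_length_le_1 phi0 phi1 x pi c Hpi Hc).
    destruct (factor_pair_nth _ _ _ Hf) as [j [Hj _]]; lia. }
  destruct (Rle_lt_dec x y1) as [Hx1|Hx1].
  { pose proof (Hshort true (threshold_letters_true_of_le_y1 Hx1)) as Hno.
    split; intros Hf; contradiction (Hno _ _ Hf). }
  destruct (Rle_lt_dec y0 x) as [Hx0|Hx0].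
  { pose proof (Hshort false (threshold_letters_false_of_ge_y0 Hx1 Hx0)) as Hno.
    split; intros Hf; contradiction (Hno _ _ Hf). }
  split; [apply threshold_word_Lmorph|apply threshold_word_Rmorph]; assumption.
Qed.

End ThresholdDynamics.

Theorem mainTheorem7 (I : R -> Prop) (phi0 phi1 : R -> R) (x : R) (pi : word) :
  is_interval I -> A2 I phi0 phi1 -> I x ->
  is_threshold_word phi0 phi1 x pi ->
  (factor [false; false] pi -> exists (w : word) (n : nat), (1 <= n)%nat /\ pi = Lmorph n w) /\
  (factor [true; true] pi -> exists (w : word) (n : nat), (1 <= n)%nat /\ pi = Rmorph n w).
Proof.
  intros _ [Hmaps [Hcontr [y0 [y1 [Iy0 [Iy1 [Fy0 [Fy1 _]]]]]]]] Ix Hpi.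
  assert (Hphi : forall k, contraction_on I (phi_of phi0 phi1 k))
    by (intros k; split; [apply Hmaps|apply Hcontr]).
  exact (threshold_word_factor_pairs I phi0 phi1 x y0 y1 (Hphi false) (Hphi true)
           Iy0 Iy1 Fy0 Fy1 Ix pi Hpi).
Qed.
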